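(* For every integer $k\ge1$ and $n=2k-1$, \[k^{n-1}=\sum\frac{n!}{i_0!\,i_1!\cdots i_{k-1}!},\] where the sum runs over all tuples $(i_0,\dots,i_{k-1})$ of nonnegative integers with $i_0+\cdots+i_{k-1}=n$ and $i_0+i_1+\cdots+i_s\ge 2s+2$ for each $s=0,1,\dots,k-2$. *)

From mathcomp Require Import all_boot.
Set Implicit Arguments. Unset Strict Implicit. Unset Printing Implicit Defensive.

(* Multinomial coefficient n! / (i_0! ... i_{k-1}!) as a natural number
   (the division is exact when the i_j sum to n). *)
Definition multinom (k n : nat) (i : {ffun 'I_k -> 'I_n.+1}) : nat :=
  n`! %/ \prod_(j < k) (i j)`!.

(* Admissible tuples: entries sum to n and, for each s = 0..k-2,
   i_0 + ... + i_s >= 2s+2.  Entries are bounded by n automatically. *)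
Definition admissible (k n : nat) (i : {ffun 'I_k -> 'I_n.+1}) : bool :=
  (\sum_(j < k) (i j : nat) == n) &&
  [forall s : 'I_k, (s.+1 < k) ==> (2 * s + 2 <= \sum_(j < k | j <= s) (i j : nat))].

(* By the multinomial theorem, the multinomial coefficients of all k-tuples
   summing to n = 2k-1 add up to k^n.  Give entry i_u the weight i_u - 2;
   the weights sum to -1, and a tuple is admissible iff all its proper
   prefixes have nonnegative weight.  By the cycle lemma exactly one of the k cyclic
   rotations of any tuple has this property (start where the prefix weights
   first attain their minimum), and rotating does not change the
   multinomial coefficient; hence k^n is k times the admissible sum. *)

From mathcomp Require Import all_boot zify zmodp.
Set Implicit Arguments. Unset Strict Implicit. Unset Printing Implicit Defensive.

Definition ffun_cons (T : Type) k (a : T) (g : {ffun 'I_k -> T}) : {ffun 'I_k.+1 -> T} :=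
  [ffun j => oapp g a (unlift ord0 j)].

Lemma big_ffun_cons (R T : Type) (idx : R) (op : Monoid.law idx) (F : T -> R) k a g :
  \big[op/idx]_(j < k.+1) F (ffun_cons a g j) = op (F a) (\big[op/idx]_(j < k) F (g j)).
Proof.
rewrite big_ord_recl !ffunE unlift_none; congr (op _ _).
by apply: eq_bigr => j _; rewrite ffunE liftK.
Qed.

Lemma ffun_cons_bij (T : finType) k :
  bijective (fun p : T * {ffun 'I_k -> T} => ffun_cons p.1 p.2).
Proof.
exists (fun f : {ffun 'I_k.+1 -> T} => (f ord0, [ffun j => f (lift ord0 j)])).
  move=> [a g] /=; congr pair; first by rewrite ffunE unlift_none.
  by apply/ffunP => j; rewrite !ffunE liftK.
move=> f; apply/ffunP => j; rewrite !ffunE /=.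
by case: unliftP => [j' ->|->]; rewrite /= ?ffunE.
Qed.

Lemma big_ffunS (R : Type) (idx : R) (op : Monoid.com_law idx) (T : finType) k
    (F : {ffun 'I_k.+1 -> T} -> R) :
  \big[op/idx]_(f : {ffun 'I_k.+1 -> T}) F f =
  \big[op/idx]_(a : T) \big[op/idx]_(g : {ffun 'I_k -> T}) F (ffun_cons a g).
Proof. by rewrite (reindex _ (onW_bij _ (ffun_cons_bij T k))) pair_big. Qed.

Lemma dvdn_prod_fact_sum k (F : 'I_k -> nat) :
  \prod_(j < k) (F j)`! %| (\sum_(j < k) F j)`!.
Proof.
elim: k F => [|k IHk] F; first by rewrite !big_ord0.
rewrite !big_ord_recl; set S := \sum_(j < k) _.
rewrite -(bin_fact (leq_addr S (F ord0))) addKn.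
by apply/dvdn_mull/dvdn_mul => //; apply: IHk.
Qed.

Lemma divn_factD a b p :
  p %| b`! -> (a + b)`! %/ (a`! * p) = 'C(a + b, a) * (b`! %/ p).
Proof.
case/dvdnP=> q b_fact.
have p_gt0 : 0 < p.
  by move: (fact_gt0 b); rewrite b_fact; case: p {b_fact} => //; rewrite muln0.
rewrite -(bin_fact (leq_addr b a)) addKn b_fact mulnK //.
have -> : 'C(a + b, a) * (a`! * (q * p)) = 'C(a + b, a) * q * (a`! * p) by lia.
by rewrite mulnK // muln_gt0 fact_gt0.
Qed.

Lemma sum_binomial_pow N k m : m <= N ->
  \sum_(a < N.+1) 'C(m, a) * k ^ (m - a) = k.+1 ^ m.
Proof.
move=> m_le_N; rewrite -[k.+1]addn1 expnDn.
under [RHS]eq_bigr => a _ do rewrite exp1n muln1.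
rewrite [RHS](big_ord_widen N.+1 (fun a => 'C(m, a) * k ^ (m - a))) // [RHS]big_mkcond.
by apply: eq_bigr => a _; case: ltnP => // m_lt_a; rewrite bin_small.
Qed.

Lemma sum_multinomial N k m : m <= N ->
  \sum_(i : {ffun 'I_k -> 'I_N.+1} | \sum_(j < k) (i j : nat) == m)
     m`! %/ \prod_(j < k) (i j)`! = k ^ m.
Proof.
elim: k m => [|k IHk] m m_le_N.
  case: m m_le_N => [|m] _.
    rewrite (big_pred1 [ffun=> ord0]) ?big_ord0 ?divn1 // => f.
    by rewrite big_ord0 eqxx; apply/esym/eqP/ffunP => -[].
  by rewrite exp0n // big_pred0 // => f; rewrite big_ord0.
rewrite -(sum_binomial_pow k m_le_N) big_mkcond big_ffunS; apply: eq_bigr => a _.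
under eq_bigr => g _ do
  rewrite big_ffun_cons (big_ffun_cons _ (fun x : 'I_N.+1 => (x : nat)`!)).
have [a_le_m | m_lt_a] := leqP a m; last first.
  rewrite bin_small // big1 // => g _; case: eqP => // sum_eq.
  by move: m_lt_a; rewrite -sum_eq ltnNge leq_addr.
rewrite -IHk ?(leq_trans (leq_subr a m)) // big_distrr -big_mkcond /=.
apply: eq_big => [g | g /eqP sum_eq]; first by apply/eqP/eqP; lia.
rewrite -{1 2}(subnKC a_le_m) divn_factD; first by rewrite subnKC.
by rewrite -sum_eq addKn (dvdn_prod_fact_sum (fun j => g j : nat)).
Qed.

Lemma sum_shift_transversal (I T : finType) (s : I -> T -> T) (A B : pred T)
    (F : T -> nat) :
  (forall d, injective (s d)) -> (forall d x, F (s d x) = F x) ->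
  (forall d x, B (s d x) -> A x) -> (forall x, A x -> #|[pred d | B (s d x)]| = 1) ->
  \sum_(x | A x) F x = #|I| * \sum_(x | B x) F x.
Proof.
move=> s_inj Fs BsA unique_shift.
transitivity (\sum_(x : T) \sum_(d | B (s d x)) F x).
  rewrite [RHS](bigID A) /= [X in _ + X]big1 ?addn0 => [|x notAx].
    apply: eq_bigr => x Ax; rewrite -[LHS]mul1n -(unique_shift x Ax).
    by rewrite -sum_nat_const.
  by rewrite big_pred0 // => d; apply/negP => /BsA; apply/negP.
rewrite (exchange_big_dep xpredT) //= -sum_nat_const; apply: eq_bigr => d _.
rewrite [RHS](reindex_inj (s_inj d)) /=.
by apply: eq_bigr => x _; rewrite Fs.
Qed.

Section CycleLemma.
Variables (c k : nat) (P : nat -> nat).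
Hypotheses (Pk : P k + 1 = c * k) (P_kD : forall t, P (k + t) = P k + P t).

Definition cycle_start d := forall r, 0 < r < k -> P d + c * r <= P (d + r).

Lemma cycle_start_exists : exists2 d, d < k & cycle_start d.
Proof.
have k_gt0 : 0 < k by case: k Pk => // ; rewrite muln0 addn1.
pose M t := P t + c * (k - t).
(* The start is the first minimiser [d] of [M]; the strict inequality
   [M d < M t] for [t < d] handles the windows that wrap around. *)
have [m _ m_min] := @arg_minnP _ (Ordinal k_gt0) xpredT (fun t : 'I_k => M t) isT.
have Mmin_ex : exists t, (t < k) && [forall u : 'I_k, M t <= M u].
  by exists m; rewrite ltn_ord /=; apply/forallP => u; apply: m_min.
have [d /andP[d_lt_k /forallP d_min] d_least] := ex_minnP Mmin_ex.
exists d => // r /andP[r_gt0 r_lt_k].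
case: (ltnP (d + r) k) => [dr_lt_k | k_le_dr].
  have := d_min (Ordinal dr_lt_k); rewrite /M /=.
  have : c * (k - d) = c * r + c * (k - (d + r)) by rewrite -mulnDr; congr (c * _); lia.
  lia.
pose t := d + r - k.
have t_lt_d : t < d by rewrite /t; lia.
have Md_lt_Mt : M d < M t.
  have : ~~ ((t < k) && [forall u : 'I_k, M t <= M u]).
    by apply/negP => /d_least; rewrite leqNgt t_lt_d.
  rewrite (ltn_trans t_lt_d d_lt_k) negb_forall => /existsP[u].
  by rewrite -ltnNge; apply: leq_ltn_trans (d_min u).
have -> : d + r = k + t by rewrite /t; lia.
rewrite P_kD.
have : c * (k - t) + c * r = c * (k - d) + c * k.
  by rewrite -!mulnDr; congr (c * _); rewrite /t; lia.
move: Md_lt_Mt; rewrite /M; lia.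
Qed.

Lemma cycle_start_unique d1 d2 :
  d1 < k -> d2 < k -> cycle_start d1 -> cycle_start d2 -> d1 = d2.
Proof.
wlog d1_le_d2 : d1 d2 / d1 <= d2.
  by move=> W *; case: (leqP d1 d2) => [|/ltnW] le; [apply: W | symmetry; apply: W].
move=> d1_lt_k d2_lt_k start1 start2; apply/eqP; rewrite eqn_leq d1_le_d2 leqNgt.
apply/negP => d1_lt_d2.
have := start1 (d2 - d1); have := start2 (d1 + k - d2).
have -> : d2 + (d1 + k - d2) = k + d1 by lia.
have -> : d1 + (d2 - d1) = d2 by lia.
have : c * (d2 - d1) + c * (d1 + k - d2) = c * k by rewrite -mulnDr; congr (c * _); lia.
rewrite P_kD; lia.
Qed.

End CycleLemma.

Section Rotation.
Variable K : nat.
Local Notation k := K.+1.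

Definition rot (T : Type) (d : nat) (i : {ffun 'I_k -> T}) : {ffun 'I_k -> T} :=
  [ffun j : 'I_k => i (inZp (j + d))].

Lemma inZp_addr_inj d : injective (fun j : 'I_k => inZp (j + d) : 'I_k).
Proof.
move=> j1 j2 /(congr1 val) /= /eqP.
by rewrite eqn_modDr !modn_small // => /eqP /val_inj.
Qed.

Lemma rot_inj (T : Type) d : injective (@rot T d).
Proof.
have [sh' _ sh'K] := injF_bij (@inZp_addr_inj d).
move=> i1 i2 eq_rot; apply/ffunP => j; rewrite -[j]sh'K.
by have := congr1 (fun f : {ffun 'I_k -> T} => f (sh' j)) eq_rot; rewrite !ffunE.
Qed.

Lemma big_rot (R T : Type) (idx : R) (op : Monoid.com_law idx) (F : T -> R) d i :
  \big[op/idx]_(j < k) F (rot d i j) = \big[op/idx]_(j < k) F (i j).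
Proof.
rewrite [RHS](reindex_inj (@inZp_addr_inj d)).
by apply: eq_bigr => j _; rewrite ffunE.
Qed.

Variable N : nat.
Implicit Type i : {ffun 'I_k -> 'I_N.+1}.

Definition psum i t := \sum_(0 <= u < t) (i (inZp u) : nat).

Lemma psum_k i : psum i k = \sum_(j < k) (i j : nat).
Proof. by rewrite /psum big_mkord; apply: eq_bigr => j _; rewrite valZpK. Qed.

Lemma psum_kD i t : psum i (k + t) = psum i k + psum i t.
Proof.
rewrite /psum (big_cat_nat _ (leq_addr t k)) //=; congr (_ + _).
rewrite -{1}[k]add0n big_addn addKn; apply: eq_bigr => u _.
by congr (nat_of_ord (i _)); apply: val_inj; rewrite /= modnDr.
Qed.

Lemma psum_rot_prefix i d (s : 'I_k) :
  psum i d + \sum_(j < k | j <= s) (rot d i j : nat) = psum i (d + s.+1).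
Proof.
rewrite /psum (big_cat_nat _ (leq_addr s.+1 d)) //=; congr (_ + _).
rewrite -{2}[d]add0n big_addn addKn.
rewrite (big_nat_widen _ _ _ _ _ (ltn_ord s)) big_mkord.
apply: eq_big => [j|j _]; first by rewrite ltnS.
by rewrite ffunE addnC.
Qed.

Lemma admissible_rot i d :
  admissible (rot d i) <-> (\sum_(j < k) (i j : nat) == N) /\ cycle_start 2 k (psum i) d.
Proof.
rewrite /admissible big_rot; split.
  case/andP=> -> /forallP bounds; split=> // r /andP[r_gt0 r_lt_k].
  have s_lt_k : r.-1 < k by lia.
  have := bounds (Ordinal s_lt_k); rewrite /= prednK // r_lt_k /=.
  have := psum_rot_prefix i d (Ordinal s_lt_k); rewrite /= prednK //; lia.
case=> -> start; apply/forallP => s; apply/implyP => s1_lt_k.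
have := start s.+1; rewrite s1_lt_k -psum_rot_prefix => /(_ isT); lia.
Qed.

Lemma card_admissible_rot i :
  N = 2 * k - 1 -> \sum_(j < k) (i j : nat) == N ->
  #|[pred d : 'I_k | admissible (rot d i)]| = 1.
Proof.
move=> N_eq sum_eq.
have psum_k1 : psum i k + 1 = 2 * k by rewrite psum_k (eqP sum_eq); lia.
have [d d_lt_k start] := cycle_start_exists psum_k1 (psum_kD i).
apply: (@eq_card1 _ (Ordinal d_lt_k)) => d'; rewrite !inE.
apply/idP/eqP => [/admissible_rot[_ start'] | ->]; last exact/admissible_rot.
by apply: val_inj; apply: (cycle_start_unique psum_k1 (psum_kD i)) start' start => /=.
Qed.

End Rotation.

Theorem mainTheorem10 (k n : nat) (hk : 1 <= k) (hn : n = 2 * k - 1) :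
  k ^ (n - 1) = \sum_(i : {ffun 'I_k -> 'I_n.+1} | admissible i) multinom i.
Proof.
case: k hk hn => [|K] // _ n_eq.
have := sum_multinomial K.+1 (leqnn n).
rewrite (@sum_shift_transversal _ _ (fun d : 'I_K.+1 => @rot K 'I_n.+1 d) _
  (@admissible K.+1 n) (@multinom K.+1 n)).
- have -> : K.+1 ^ n = K.+1 * K.+1 ^ (n - 1) by rewrite -expnS; congr expn; lia.
  by rewrite card_ord => /eqP; rewrite eqn_pmul2l // => /eqP ->.
- exact: rot_inj.
- move=> d i; apply: (congr1 (divn n`!)).
  by rewrite (big_rot _ (fun x : 'I_n.+1 => (x : nat)`!)).
- by move=> d i /andP[]; rewrite big_rot.
- by move=> i; apply: card_admissible_rot.
Qed.
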